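(* Let $n,k$ be integers with $1<k<n-1$ and let $\mathcal{P}_{k,n}=\{x\in[0,1]^n:\sum_{i=1}^nx_i=k\}$. There is no differentiable strong Bernoulli factory for $\mathcal{P}_{k,n}$.
   Context: A Bernoulli factory with output set $V$ (for inputs $x\in[0,1]^n$) is a (possibly infinite) rooted binary tree whose internal nodes are labeled by an index $i\in[n]$ or a known constant $c\in(0,1)$ and whose leaves are labeled by elements of $V$; on input $x$ one walks from the root, at a node labeled $i$ flipping a fresh independent coin that is $1$ with probability $x_i$, at a node labeled $c$ a fresh coin of bias $c$, following the edge labeled by the outcome, and outputs the label of the leaf reached; $\mathcal{F}(x)$ is the output and $T_{\mathcal{F}}(x)$ the depth of the leaf reached ($\infty$ if none). For a polytope $\mathcal{P}$ with vertex set $V$, a strong Bernoulli factory for $\mathcal{P}$ is such a factory with output set $V$ that terminates almost surely and satisfies $\mathbb{E}[\mathcal{F}(x)]=x$ for all $x\in\mathcal{P}$. Define $P_v(x)=\Pr[\mathcal{F}(x)=v]$ and $P_{v,T}(x)=\Pr[\mathcal{F}(x)=v\wedge T_{\mathcal{F}}(x)\le T]$; the latter is the polynomial equal to the sum, over leaves labeled $v$ at depth at most $T$, of the product of the transition probabilities along the root-to-leaf path. Let $\mathcal{H}(\mathcal{P})$ be the affine span of $\mathcal{P}$ and $\mathcal{H}_0(\mathcal{P})=\{y-y':y,y'\in\mathcal{H}(\mathcal{P})\}$. $\mathcal{F}$ is differentiable (as a factory for $\mathcal{P}$) if for each $v\in V$ and each $u\in\mathcal{H}_0(\mathcal{P})$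 with $\|u\|=1$, at every $x\in\mathcal{P}$ the directional derivative $\partial_uP_v(x)$ exists and equals $\lim_{T\to\infty}\partial_uP_{v,T}(x)$. *)

From HB Require Import structures.
From mathcomp Require Import all_boot all_order all_algebra.
From mathcomp Require Import all_classical all_reals all_analysis.
Set Implicit Arguments. Unset Strict Implicit. Unset Printing Implicit Defensive.
Import Order.TTheory GRing.Theory Num.Theory.
Import numFieldNormedType.Exports.
Local Open Scope classical_set_scope.
Local Open Scope ring_scope.

(* Points of R^n are row vectors 'rV[R]_n; coordinate i of x is x ord0 i. *)

Definition hypersimplex (R : realType) (n k : nat) : set 'rV[R]_n :=
  [set x | (forall i : 'I_n, 0 <= x ord0 i <= 1) /\ \sum_(i < n) x ord0 i = k%:R].

Definition extreme_point (R : realType) (n : nat) (A : set 'rV[R]_n)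
    (v : 'rV[R]_n) : Prop :=
  A v /\ ~ (exists (y z : 'rV[R]_n) (l : R), A y /\ A z /\ y != z /\
            0 < l < 1 /\ v = l *: y + (1 - l) *: z).

Definition affine_span (R : realType) (n : nat) (A : set 'rV[R]_n) : set 'rV[R]_n :=
  [set y | exists (m : nat) (p : 'I_m -> 'rV[R]_n) (c : 'I_m -> R),
     (forall j, A (p j)) /\ \sum_(j < m) c j = 1 /\ y = \sum_(j < m) c j *: p j].

Definition affine_dir (R : realType) (n : nat) (A : set 'rV[R]_n) : set 'rV[R]_n :=
  [set u | exists y y', affine_span A y /\ affine_span A y' /\ u = y - y'].

Definition enorm (R : realType) (n : nat) (u : 'rV[R]_n) : R :=
  Num.sqrt (\sum_(i < n) u ord0 i ^+ 2).

Inductive node (R : realType) (n : nat) :=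
  | Coin of 'I_n
  | Const of R
  | Leaf of 'rV[R]_n.
Arguments Coin {R n}.
Arguments Const {R n}.
Arguments Leaf {R n}.

(* A (possibly infinite) rooted binary tree is given by the labels of its
   nodes, each node being addressed by the sequence of edge labels (coin
   outcomes) from the root; the children of an internal node s are
   rcons s false and rcons s true.  Nodes below a leaf are never reached. *)
Definition factory (R : realType) (n : nat) := seq bool -> node R n.

Definition factory_wf (R : realType) (n : nat) (V : set 'rV[R]_n)
    (F : factory R n) : Prop :=
  forall s, match F s with
            | Coin _ => True
            | Const c => 0 < c < 1
            | Leaf v => V v
            end.

(* Probability of following the edges s starting at node pre (product of
   transition probabilities); 0 if the walk would stop at a leaf before. *)
Fixpoint pathprob (R : realType) (n : nat) (F : factory R n) (x : 'rV[R]_n)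
    (pre s : seq bool) : R :=
  match s with
  | [::] => 1
  | b :: s' =>
      let p := match F pre with
               | Coin i => if b then x ord0 i else 1 - x ord0 i
               | Const c => if b then c else 1 - c
               | Leaf _ => 0
               end in
      p * pathprob F x (rcons pre b) s'
  end.

Definition reachprob (R : realType) (n : nat) (F : factory R n) (x : 'rV[R]_n)
    (s : seq bool) : R := pathprob F x [::] s.

(* P_{v,T}(x) = Pr[F(x) = v and T_F(x) <= T]. *)
Definition PvT (R : realType) (n : nat) (F : factory R n) (v : 'rV[R]_n)
    (T : nat) (x : 'rV[R]_n) : R :=
  \sum_(t < T.+1) \sum_(s : t.-tuple bool)
     match F (val s) with
     | Leaf w => if w == v then reachprob F x (val s) else 0
     | _ => 0
     end.

Definition haltT (R : realType) (n : nat) (F : factory R n) (T : nat)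
    (x : 'rV[R]_n) : R :=
  \sum_(t < T.+1) \sum_(s : t.-tuple bool)
     match F (val s) with
     | Leaf _ => reachprob F x (val s)
     | _ => 0
     end.

(* E[F(x) ; T_F(x) <= T]. *)
Definition expT (R : realType) (n : nat) (F : factory R n) (T : nat)
    (x : 'rV[R]_n) : 'rV[R]_n :=
  \sum_(t < T.+1) \sum_(s : t.-tuple bool)
     match F (val s) with
     | Leaf w => reachprob F x (val s) *: w
     | _ => 0
     end.

Definition Pv (R : realType) (n : nat) (F : factory R n) (v : 'rV[R]_n)
    (x : 'rV[R]_n) : R :=
  lim ((fun T => PvT F v T x) @ \oo).

(* Strong Bernoulli factory for the polytope P (with vertex set V = extreme
   points of P): terminates almost surely and E[F(x)] = x, for all x in P. *)
Definition strong_factory (R : realType) (n : nat) (P : set 'rV[R]_n)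
    (F : factory R n) : Prop :=
  factory_wf (extreme_point P) F /\
  (forall x, P x ->
     ((fun T => haltT F T x) @ \oo --> (1 : R)) /\
     ((fun T => expT F T x) @ \oo --> x)).

Definition dir_deriv (R : realType) (n : nat) (f : 'rV[R]_n -> R)
    (x u : 'rV[R]_n) : R :=
  derive1 (fun t : R => f (x + t *: u)) 0.

(* The directional derivative of f at x in direction u exists and equals d,
   where the difference quotient is taken along points x + t u lying in the
   domain P (on which the factory probabilities are defined). *)
Definition has_dir_deriv_in (R : realType) (n : nat) (P : set 'rV[R]_n)
    (f : 'rV[R]_n -> R) (x u : 'rV[R]_n) (d : R) : Prop :=
  (fun t : R => (f (x + t *: u) - f x) / t)
     @ within [set t : R | t != 0 /\ P (x + t *: u)] (nbhs (0 : R)) --> d.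

Definition differentiable_factory (R : realType) (n : nat) (P : set 'rV[R]_n)
    (F : factory R n) : Prop :=
  forall v, extreme_point P v ->
  forall u, affine_dir P u -> enorm u = 1 ->
  forall x, P x ->
    exists d : R, has_dir_deriv_in P (Pv F v) x u d /\
                  ((fun T => dir_deriv (PvT F v T) x u) @ \oo --> d).

(* Let w be the vertex of P_{k,n} whose ones are the first k coordinates, pick
   a, i with w_a = w_i = 1 and b, j with w_b = w_j = 0 (this is where 1 < k < n - 1
   is used), and let v = w - e_a + e_b.  Along the edge [w, v] every coordinate
   outside {a, b} is 0 or 1, so an unbiased factory can only output w or v there and
   P_v(x) = x_b.  Along the edges leaving w in the directions e_j - e_a, e_b - e_i
   and e_j - e_i some coordinate of x stays 0 or 1 while v disagrees with it, so P_v
   vanishes.  Hence the one-sided directional derivatives of P_v at w in these four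
   unit directions are 1/sqrt 2, 0, 0 and 0.  For a differentiable factory they are
   the limits of the directional derivatives of the polynomials P_{v,T}, which are
   linear in the direction; as e_b - e_a = (e_j - e_a) + (e_b - e_i) - (e_j - e_i),
   this is impossible. *)

From HB Require Import structures.
From mathcomp Require Import all_boot all_order all_algebra.
From mathcomp Require Import all_classical all_reals all_analysis.
From mathcomp Require Import ring lra.
Set Implicit Arguments. Unset Strict Implicit. Unset Printing Implicit Defensive.
Import Order.TTheory GRing.Theory Num.Theory.
Import numFieldNormedType.Exports.
Local Open Scope classical_set_scope.
Local Open Scope ring_scope.

Section Hypersimplex.
Variables (R : realType) (n k : nat).
Local Notation P := (@hypersimplex R n k).
Implicit Types (x y z w : 'rV[R]_n) (p q l : 'I_n).

Definition zero_one x := forall l, x ord0 l = 0 \/ x ord0 l = 1.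

Definition transfer x p q (s : R) : 'rV[R]_n :=
  x + s *: (delta_mx 0 q - delta_mx 0 p).

Lemma neq_of_coord_one_zero x p q : x ord0 p = 1 -> x ord0 q = 0 -> p != q.
Proof.
move=> xp xq; apply/eqP => epq; move: xp; rewrite epq xq => /eqP.
by rewrite eq_sym oner_eq0.
Qed.

Lemma transfer_coord x p q s l :
  transfer x p q s ord0 l = x ord0 l + s * ((l == q)%:R - (l == p)%:R).
Proof. by rewrite !mxE eqxx. Qed.

Lemma transfer_coord_out x p q s l : l != p -> l != q ->
  transfer x p q s ord0 l = x ord0 l.
Proof.
by move=> /negbTE lp /negbTE lq; rewrite transfer_coord lp lq subrr mulr0 addr0.
Qed.

Lemma transfer_coord_src x p q s : p != q -> transfer x p q s ord0 p = x ord0 p - s.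
Proof. by move=> /negbTE pq; rewrite transfer_coord pq eqxx sub0r mulrN1. Qed.

Lemma transfer_coord_dst x p q s : p != q -> transfer x p q s ord0 q = x ord0 q + s.
Proof.
by move=> pq; rewrite transfer_coord eqxx eq_sym (negbTE pq) subr0 mulr1.
Qed.

Lemma sum_transfer x p q s :
  \sum_(l < n) transfer x p q s ord0 l = \sum_(l < n) x ord0 l.
Proof.
have sum_delta q' : \sum_(l < n) ((l == q')%:R : R) = 1.
  by rewrite (bigD1 q') //= eqxx big1 ?addr0 // => l /negbTE ->.
under eq_bigr do rewrite transfer_coord.
by rewrite big_split /= -mulr_sumr sumrB !sum_delta subrr mulr0 addr0.
Qed.

Lemma transfer_hypersimplex x p q s : P x -> p != q ->
  0 <= x ord0 p - s <= 1 -> 0 <= x ord0 q + s <= 1 -> P (transfer x p q s).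
Proof.
move=> [x01 sx] pq hp hq; split; last by rewrite sum_transfer.
move=> l; have [->|lp] := eqVneq l p; first by rewrite transfer_coord_src.
have [->|lq] := eqVneq l q; first by rewrite transfer_coord_dst.
by rewrite transfer_coord_out.
Qed.

Lemma transfer_vertex_hypersimplex w p q s : P w ->
  w ord0 p = 1 -> w ord0 q = 0 -> P (transfer w p q s) <-> 0 <= s <= 1.
Proof.
move=> Pw wp wq; have pq := neq_of_coord_one_zero wp wq.
split=> [[x_box _] | /andP[s0 s1]].
  by have := x_box q; rewrite transfer_coord_dst // wq add0r.
by apply: transfer_hypersimplex; rewrite ?wp ?wq //; apply/andP; split; lra.
Qed.

Lemma hypersimplex_extreme_zero_one z : extreme_point P z -> zero_one z.
Proof.
move=> [[z_box sz] not_mid] i.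
have /andP[zi0 zi1] := z_box i.
have [|zi_neq0] := eqVneq (z ord0 i) 0; first by left.
have [|zi_neq1] := eqVneq (z ord0 i) 1; first by right.
have zi_gt0 : 0 < z ord0 i by rewrite lt_neqAle eq_sym zi_neq0.
have zi_lt1 : z ord0 i < 1 by rewrite lt_neqAle zi_neq1.
exfalso; have [[j /andP[ji /andP[zj0 zj1]]]|no_frac] :=
  pselect (exists j, (j != i) && (0 < z ord0 j < 1)).
  (* two fractional coordinates: move mass back and forth between them *)
  pose e := Num.min (Num.min (z ord0 i) (1 - z ord0 i))
                    (Num.min (z ord0 j) (1 - z ord0 j)).
  have e0 : 0 < e by rewrite !lt_min zi_gt0 zj0 !subr_gt0 zi_lt1 zj1.
  have [ei [ei' [ej ej']]] :
      [/\ e <= z ord0 i, e <= 1 - z ord0 i, e <= z ord0 j & e <= 1 - z ord0 j].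
    by split; rewrite !ge_min ?lexx ?orbT.
  apply: not_mid; exists (transfer z j i e), (transfer z j i (- e)), 2^-1.
  split; first by apply: transfer_hypersimplex => //; apply/andP; split; lra.
  split; first by apply: transfer_hypersimplex => //; apply/andP; split; lra.
  split.
    apply/eqP => /rowP /(_ i); rewrite !transfer_coord_dst // => /eqP; lra.
  split; first by apply/andP; split; lra.
  by apply/rowP => l; rewrite !mxE; field.
(* otherwise the coordinate sum k would not be an integer *)
have [m sum_m] : exists m : nat, \sum_(j | j != i) z ord0 j = m%:R.
  elim/big_ind: _ => [|_ _ [m1 ->] [m2 ->]|j ji]; first by exists 0%N.
    by exists (m1 + m2)%N; rewrite natrD.
  have /andP[zj0 zj1] := z_box j.
  have [->|zj_neq0] := eqVneq (z ord0 j) 0; first by exists 0%N.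
  exists 1%N; apply/eqP; rewrite eq_le zj1 leNgt /=; apply/negP => zj_lt1.
  by apply: no_frac; exists j; rewrite ji lt_neqAle eq_sym zj_neq0 zj0 zj_lt1.
move: sz; rewrite (bigD1 i) //= sum_m => sz.
have : (m < k)%N by rewrite -(ltr_nat R); lra.
have : (k < m.+1)%N by rewrite -(ltr_nat R) -addn1 natrD; lra.
by rewrite ltnS leqNgt => /negP.
Qed.

Lemma zero_one_extreme_hypersimplex z : P z -> zero_one z -> extreme_point P z.
Proof.
move=> Pz z01; split=> // -[y [y' [t [[y_box _] [[y'_box _] [yy' [/andP[t0 t1] ez]]]]]]].
move/eqP: yy'; apply; apply/rowP => i.
have /andP[yi0 yi1] := y_box i; have /andP[y'i0 y'i1] := y'_box i.
have := congr1 (fun M : 'rV[R]_n => M ord0 i) ez; rewrite /= !mxE.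
by case: (z01 i) => -> e; nra.
Qed.

Lemma edge_coord_bound w z a b : zero_one w -> zero_one z ->
  \sum_(l < n) z ord0 l = \sum_(l < n) w ord0 l -> w ord0 a = 1 -> w ord0 b = 0 ->
  z ord0 b <= (z == transfer w a b 1)%:R +
              \sum_(l < n | (l != a) && (l != b)) `|z ord0 l - w ord0 l|.
Proof.
move=> w01 z01 szw wa wb; have ab := neq_of_coord_one_zero wa wb.
have ind_ge0 : 0 <= (z == transfer w a b 1)%:R :> R by case: (_ == _).
have dist_ge0 : 0 <= \sum_(l < n | (l != a) && (l != b)) `|z ord0 l - w ord0 l|.
  by apply: sumr_ge0 => l _; rewrite normr_ge0.
have [[l /and3P[la lb zwl]] | agree] :=
  pselect (exists l, [&& l != a, l != b & z ord0 l != w ord0 l]).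
  have zb1 : z ord0 b <= 1 by case: (z01 b) => ->; rewrite ?ler01.
  have dist_l : `|z ord0 l - w ord0 l| = 1.
    by move: zwl; case: (z01 l) => ->; case: (w01 l) => ->;
      rewrite ?eqxx // ?subr0 ?sub0r ?normrN ?normr1.
  rewrite (bigD1 l) /=; last by rewrite la lb.
  have : 0 <= \sum_(l' < n | ((l' != a) && (l' != b)) && (l' != l))
                `|z ord0 l' - w ord0 l'| by apply: sumr_ge0 => l' _.
  by lra.
have zw l : l != a -> l != b -> z ord0 l = w ord0 l.
  by move=> la lb; apply/eqP/negPn/negP => zwl; apply: agree; exists l; rewrite la lb zwl.
case: (z01 b) => zb; first by rewrite zb; lra.
have za : z ord0 a = 0.
  have ba : b != a by rewrite eq_sym.
  move: szw; rewrite (bigD1 a) // [in RHS](bigD1 a) //=.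
  rewrite (bigD1 b ba) [in RHS](bigD1 b ba) /=.
  rewrite (eq_bigr (fun l => w ord0 l)); last by move=> l /andP[la lb]; rewrite zw.
  by rewrite wa wb zb => sum_eq; lra.
have -> : z == transfer w a b 1.
  apply/eqP/rowP => l.
  have [->|la] := eqVneq l a; first by rewrite transfer_coord_src // wa subrr.
  have [->|lb] := eqVneq l b; first by rewrite transfer_coord_dst // wb add0r.
  by rewrite transfer_coord_out // zw.
by rewrite zb /= mulr1n; lra.
Qed.

Lemma affine_dir_scale_sub (A : set 'rV[R]_n) (y y' : 'rV[R]_n) (c : R) :
  A y -> A y' -> affine_dir A (c *: (y' - y)).
Proof.
move=> Ay Ay'; exists ((1 - c) *: y + c *: y'), y; split; last split.
- exists 2%N, (fun j : 'I_2 => if val j == 0%N then y else y'),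
         (fun j : 'I_2 => if val j == 0%N then 1 - c else c).
  split; first by case=> [[|[|]]].
  by rewrite !big_ord_recl !big_ord0 /=; split; [ring | rewrite addr0].
- exists 1%N, (fun _ => y), (fun _ => 1); split => //.
  by rewrite !big_ord_recl !big_ord0 /= !addr0 scale1r.
- by apply/rowP => i; rewrite !mxE; ring.
Qed.

Lemma enorm_edge_dir p q : p != q ->
  enorm ((Num.sqrt 2)^-1 *: (delta_mx 0 q - delta_mx 0 p)) = 1 :> R.
Proof.
move=> pq; rewrite /enorm.
under eq_bigr do rewrite !mxE eqxx exprMn.
rewrite -mulr_sumr (bigD1 q) //= (bigD1 p pq) /=.
rewrite big1; last by move=> l /andP[/negbTE -> /negbTE ->]; rewrite subrr expr0n.
rewrite !eqxx eq_sym (negbTE pq) subr0 sub0r sqrrN expr1n exprVn sqr_sqrtr ?ler0n //.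
by rewrite addr0 -[1 + 1]/(2%:R) mulVf ?sqrtr1 ?pnatr_eq0.
Qed.

Lemma hypersimplex_first_k : (k <= n)%N ->
  P (\row_(l < n) ((l < k)%N)%:R).
Proof.
move=> kn; split=> [l|]; first by rewrite mxE; case: (_ < _)%N; rewrite ?lexx ?ler01.
rewrite (eq_bigr (fun l : 'I_n => if (l < k)%N then 1 else 0)); last first.
  by move=> l _; rewrite mxE; case: (_ < _)%N.
by rewrite -big_mkcond -(big_ord_widen n (fun=> 1 : R) kn) sumr_const card_ord.
Qed.

End Hypersimplex.

Section LeafMean.
Variables (R : realType) (n : nat) (F : factory R n).
Implicit Types (x : 'rV[R]_n) (g : 'rV[R]_n -> R).

Definition leaf_mean g T x : R :=
  \sum_(t < T.+1) \sum_(s : t.-tuple bool)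
     match F (val s) with
     | Leaf z => reachprob F x (val s) * g z
     | _ => 0
     end.

Lemma PvT_leaf_mean v T x : PvT F v T x = leaf_mean (fun z => (z == v)%:R) T x.
Proof.
apply: eq_bigr => t _; apply: eq_bigr => s _; case: (F (val s)) => // z.
by case: (z == v); rewrite ?mulr1 ?mulr0.
Qed.

Lemma haltT_leaf_mean T x : haltT F T x = leaf_mean (fun=> 1) T x.
Proof.
by apply: eq_bigr => t _; apply: eq_bigr => s _; case: (F (val s)) => // z; rewrite mulr1.
Qed.

Lemma expT_leaf_mean T x i : expT F T x ord0 i = leaf_mean (fun z => z ord0 i) T x.
Proof.
rewrite summxE; apply: eq_bigr => t _; rewrite summxE.
by apply: eq_bigr => s _; case: (F (val s)) => *; rewrite !mxE.
Qed.

Lemma leaf_meanB g1 g2 T x :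
  leaf_mean (fun z => g1 z - g2 z) T x = leaf_mean g1 T x - leaf_mean g2 T x.
Proof.
rewrite -sumrB; apply: eq_bigr => t _; rewrite -sumrB.
by apply: eq_bigr => s _; case: (F (val s)) => *; rewrite ?subr0 ?mulrBr.
Qed.

Lemma leaf_mean_sum (I : finType) (P : pred I) (G : I -> 'rV[R]_n -> R) T x :
  leaf_mean (fun z => \sum_(l | P l) G l z) T x = \sum_(l | P l) leaf_mean (G l) T x.
Proof.
rewrite exchange_big; apply: eq_bigr => t _; rewrite exchange_big.
by apply: eq_bigr => s _; case: (F (val s)) => [i|c|z]; rewrite ?mulr_sumr // big1.
Qed.

Lemma leaf_mean0 T x : leaf_mean (fun=> 0) T x = 0.
Proof.
by apply: big1 => t _; apply: big1 => s _; case: (F (val s)) => *; rewrite ?mulr0.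
Qed.

Variable V : set 'rV[R]_n.
Hypothesis F_wf : factory_wf V F.

Lemma eq_leaf_mean g1 g2 :
  (forall z, V z -> g1 z = g2 z) -> leaf_mean g1 = leaf_mean g2.
Proof.
move=> g12; apply/funext => T; apply/funext => x.
apply: eq_bigr => t _; apply: eq_bigr => s _.
by have := F_wf (val s); case: (F (val s)) => // z /g12 ->.
Qed.

Lemma pathprob_ge0 x pre s : (forall i, 0 <= x ord0 i <= 1) -> 0 <= pathprob F x pre s.
Proof.
move=> x_box; elim: s pre => [|b s IH] pre /=; first exact: ler01.
apply: mulr_ge0 => //; have := F_wf pre; case: (F pre) => [i|c|z] //=.
- by move=> _; have /andP[xi0 xi1] := x_box i; case: b; rewrite ?subr_ge0.
- by move=> /andP[c0 c1]; case: b; rewrite ?subr_ge0 ltW.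
Qed.

Lemma leaf_mean_le g1 g2 T x : (forall i, 0 <= x ord0 i <= 1) ->
  (forall z, V z -> g1 z <= g2 z) -> leaf_mean g1 T x <= leaf_mean g2 T x.
Proof.
move=> x_box g12; apply: ler_sum => t _; apply: ler_sum => s _.
have := F_wf (val s); case: (F (val s)) => // z Vz.
by apply: ler_wpM2l; [exact: pathprob_ge0 | exact: g12].
Qed.

End LeafMean.

Section DirectionalDerivative.
Variables (R : realType) (n : nat).

Lemma dir_derivE (f : 'rV[R]_n -> R) x u :
  differentiable f x -> dir_deriv f x u = 'd f x u.
Proof.
move=> df; rewrite -(deriveE u df) /dir_deriv derive1E /derive.
suff -> : (fun h : R => h^-1 *: (((fun t : R => f (x + t *: u)) \o shift 0) h%:A
                                 - f (x + 0 *: u))) =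
          (fun h : R => h^-1 *: ((f \o shift x) (h *: u) - f x)) by [].
apply/funext => h /=; rewrite scale0r !addr0 [x + _]addrC.
by congr (_ *: (f (_ + _) - _)); congr (_ *: _); exact: mulr1.
Qed.

Lemma differentiable_pathprob (F : factory R n) pre s x :
  differentiable (fun y => pathprob F y pre s) x.
Proof.
elim: s pre => [|b s IH] pre /=; first exact: differentiable_cst.
apply: differentiableM => //; case: (F pre) => [i|c|z]; try case: b;
  try exact: differentiable_cst.
- exact: differentiable_coord.
- by apply: differentiableB; [exact: differentiable_cst | exact: differentiable_coord].
Qed.

Lemma differentiable_big_sum (I : Type) (r : seq I) (P : pred I)
    (f : I -> 'rV[R]_n -> R) x :
  (forall i, differentiable (f i) x) ->
  differentiable (fun y => \sum_(i <- r | P i) f i y) x.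
Proof.
move=> df; rewrite -(fct_sumE r P f); elim/big_ind: _ => // g h dg dh.
exact: differentiableD.
Qed.

Lemma differentiable_PvT (F : factory R n) v T x : differentiable (PvT F v T) x.
Proof.
apply: differentiable_big_sum => t; apply: differentiable_big_sum => s.
case: (F (val s)) => [i|c|z]; try exact: differentiable_cst.
by case: (z == v); [exact: differentiable_pathprob | exact: differentiable_cst].
Qed.


Lemma cvg_within_cst_eq (f : R -> R) (A : set R) (K d e : R) : 0 < e ->
  (forall t, 0 < t <= e -> A t) -> (forall t, A t -> f t = K) ->
  f @ within A (nbhs (0 : R)) --> d -> d = K.
Proof.
move=> e0 Ae fK fd; apply/eqP; apply/negPn/negP => dK.
have dK0 : 0 < `|d - K| by rewrite normr_gt0 subr_eq0.
move/cvgrPdist_lt: fd => /(_ _ dK0); rewrite near_withinE => /nbhs_ballP[r r0 near_r].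
pose t := Num.min (r / 2) e.
have t0 : 0 < t by rewrite lt_min e0 divr_gt0.
have te : t <= e by rewrite ge_min lexx orbT.
have tr : t < r by rewrite gt_min ltr_pdivrMr // ltr_pMr // ltr1n.
have At : A t by apply: Ae; rewrite t0 te.
have := near_r t; rewrite /ball /= sub0r normrN gtr0_norm // => /(_ tr At).
by rewrite fK // ltxx.
Qed.

End DirectionalDerivative.

Section StrongFactory.
Variables (R : realType) (n k : nat) (F : factory R n).
Local Notation P := (@hypersimplex R n k).
Hypothesis F_strong : strong_factory P F.
Implicit Types (x v w : 'rV[R]_n) (g : 'rV[R]_n -> R).

Let F_wf : factory_wf (extreme_point P) F := F_strong.1.

Let extreme_box z : extreme_point P z -> forall i, 0 <= z ord0 i <= 1.
Proof. by case=> -[]. Qed.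

Lemma leaf_mean1_cvg x : P x -> leaf_mean F (fun=> 1) T x @[T --> \oo] --> (1 : R).
Proof.
move=> Px; have [halt _] := F_strong.2 x Px.
by under eq_fun do rewrite -haltT_leaf_mean.
Qed.

Lemma leaf_mean_coord_cvg x i : P x ->
  leaf_mean F (fun z => z ord0 i) T x @[T --> \oo] --> x ord0 i.
Proof.
move=> Px; have [_ mean] := F_strong.2 x Px.
under eq_fun do rewrite -expT_leaf_mean.
exact: (cvg_comp _ _ mean (@coord_continuous R 1 n ord0 i x)).
Qed.

Lemma leaf_mean_squeeze0 x g h : P x ->
  (forall z, extreme_point P z -> 0 <= h z <= g z) ->
  leaf_mean F g T x @[T --> \oo] --> 0 -> leaf_mean F h T x @[T --> \oo] --> 0.
Proof.
move=> [x_box _] hg; apply: (squeeze_cvgr _ (cvg_cst 0)); apply: nearW => T.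
rewrite -(leaf_mean0 F T x); apply/andP.
by split; apply: (leaf_mean_le F_wf) => // z /hg /andP[].
Qed.

Lemma leaf_mean_dist_coord_cvg0 x l : P x -> x ord0 l = 0 \/ x ord0 l = 1 ->
  leaf_mean F (fun z => `|z ord0 l - x ord0 l|) T x @[T --> \oo] --> 0.
Proof.
move=> Px [] xl.
- rewrite (eq_leaf_mean F_wf (g2 := fun z => z ord0 l)); last first.
    by move=> z /extreme_box /(_ l) /andP[zl0 _]; rewrite xl subr0 ger0_norm.
  by rewrite -xl; exact: leaf_mean_coord_cvg.
- rewrite (eq_leaf_mean F_wf (g2 := fun z => 1 - z ord0 l)); last first.
    by move=> z /extreme_box /(_ l) /andP[_ zl1]; rewrite xl distrC ger0_norm ?subr_ge0.
  under eq_fun do rewrite leaf_meanB.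
  rewrite -(subrr 1) -{2}xl.
  by apply: cvgB; [exact: leaf_mean1_cvg | exact: leaf_mean_coord_cvg].
Qed.

Lemma Pv_eq0_coord x v l : P x -> x ord0 l = 0 \/ x ord0 l = 1 ->
  v ord0 l = 1 - x ord0 l -> Pv F v x = 0.
Proof.
move=> Px xl vl; apply: cvg_lim => //; under eq_fun do rewrite PvT_leaf_mean.
apply: (leaf_mean_squeeze0 Px _ (leaf_mean_dist_coord_cvg0 Px xl)) => z _.
have [->|_] := eqVneq z v; last by rewrite normr_ge0 lexx.
rewrite vl /= mulr1n ler01 /=.
by case: xl => ->; rewrite ?subr0 ?subrr ?sub0r ?normrN normr1.
Qed.

Lemma Pv_transfer_edge w a b s : P w -> zero_one w ->
  w ord0 a = 1 -> w ord0 b = 0 -> 0 <= s <= 1 ->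
  Pv F (transfer w a b 1) (transfer w a b s) = s.
Proof.
move=> Pw w01 wa wb s01; set v := transfer w a b 1; set x := transfer w a b s.
have ab := neq_of_coord_one_zero wa wb.
have Px : P x by apply/transfer_vertex_hypersimplex.
have off_edge0 : leaf_mean F (fun z => \sum_(l < n | (l != a) && (l != b))
                   `|z ord0 l - w ord0 l|) T x @[T --> \oo] --> 0.
  under eq_fun do rewrite leaf_mean_sum.
  pose dist l T := leaf_mean F (fun z => `|z ord0 l - w ord0 l|) T x.
  suff : (fun T => \sum_(l < n | (l != a) && (l != b)) dist l T) @ \oo -->
         \sum_(l < n | (l != a) && (l != b)) (0 : R) by rewrite big1.
  apply: cvg_big => [|l /andP[la lb]]; first exact: add_continuous.
  rewrite /dist -(transfer_coord_out w s la lb).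
  by apply: leaf_mean_dist_coord_cvg0; rewrite // transfer_coord_out.
have gap0 : leaf_mean F (fun z => z ord0 b - (z == v)%:R) T x @[T --> \oo] --> 0.
  apply: leaf_mean_squeeze0 off_edge0 => // z ext_z.
  have [[z_box sz] _] := ext_z; have [_ sw] := Pw.
  rewrite subr_ge0 lerBlDl; apply/andP; split.
    case: eqP => [->|_]; first by rewrite transfer_coord_dst // wb add0r.
    by have /andP[] := z_box b.
  apply: edge_coord_bound => //; first exact: hypersimplex_extreme_zero_one ext_z.
  by rewrite sz sw.
apply: cvg_lim => //.
have -> : (fun T => PvT F v T x) = (fun T => leaf_mean F (fun z => z ord0 b) T x -
                        leaf_mean F (fun z => z ord0 b - (z == v)%:R) T x).
  apply/funext => T; rewrite PvT_leaf_mean -leaf_meanB.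
  by congr leaf_mean; apply/funext => z; rewrite opprB addrC subrK.
have xb : x ord0 b = s by rewrite transfer_coord_dst // wb add0r.
by rewrite -xb -[x ord0 b]subr0; exact: cvgB (leaf_mean_coord_cvg (i := b) Px) gap0.
Qed.

End StrongFactory.

Section NoDifferentiableFactory.
Variables (R : realType) (n k : nat) (F : factory R n).
Local Notation P := (@hypersimplex R n k).
Hypotheses (F_strong : strong_factory P F) (F_diff : differentiable_factory P F).
Variables (w : 'rV[R]_n) (a i b j : 'I_n).
Hypotheses (Pw : P w) (w01 : zero_one w).
Hypotheses (wa : w ord0 a = 1) (wi : w ord0 i = 1).
Hypotheses (wb : w ord0 b = 0) (wj : w ord0 j = 0).
Hypotheses (ai : a != i) (bj : b != j).

Let v := transfer w a b 1.
Let c : R := (Num.sqrt 2)^-1.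
Let edge_dir (p q : 'I_n) : 'rV[R]_n := c *: (delta_mx 0 q - delta_mx 0 p).

Let c_gt0 : 0 < c. Proof. by rewrite invr_gt0 sqrtr_gt0 ltr0n. Qed.

Let c_le1 : c <= 1.
Proof.
have c2 : c ^+ 2 = 2^-1 by rewrite exprVn sqr_sqrtr ?ler0n.
by have := c_gt0; nra.
Qed.

Let ab : a != b := neq_of_coord_one_zero wa wb.

Let v_coord_a : v ord0 a = 1 - w ord0 a.
Proof. by rewrite transfer_coord_src // wa. Qed.

Let v_coord_b : v ord0 b = 1 - w ord0 b.
Proof. by rewrite transfer_coord_dst // wb add0r subr0. Qed.

Let v_extreme : extreme_point P v.
Proof.
apply: zero_one_extreme_hypersimplex.
  by apply/transfer_vertex_hypersimplex; rewrite // ler01 lexx.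
move=> l; have [->|la] := eqVneq l a; first by rewrite v_coord_a wa subrr; left.
have [->|lb] := eqVneq l b; first by rewrite v_coord_b wb subr0; right.
by rewrite transfer_coord_out.
Qed.

Lemma edge_dir_deriv_cvg p q K : w ord0 p = 1 -> w ord0 q = 0 ->
  (forall s, 0 <= s <= 1 -> Pv F v (transfer w p q s) = K * s) ->
  (fun T => dir_deriv (PvT F v T) w (edge_dir p q)) @ \oo --> K * c.
Proof.
move=> wp wq PvK; have pq := neq_of_coord_one_zero wp wq.
have on_edge t : w + t *: edge_dir p q = transfer w p q (t * c) by rewrite scalerA.
have dir_edge : edge_dir p q = c *: (transfer w p q 1 - w).
  by rewrite addrAC subrr add0r scale1r.
have [|d [dPv dPvT]] := F_diff v_extreme (u := edge_dir p q) _ (enorm_edge_dir R pq) Pw.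
  rewrite dir_edge; apply: affine_dir_scale_sub => //.
  by apply/transfer_vertex_hypersimplex; rewrite // ler01 lexx.
suff <- : d = K * c by [].
(* on the admissible side of [w] the difference quotient is identically [K * c] *)
apply: (cvg_within_cst_eq ltr01 _ _ dPv) => t.
  move=> /andP[t0 t1]; split; first by rewrite gt_eqF.
  have c0 := c_gt0; have c1 := c_le1.
  by rewrite on_edge transfer_vertex_hypersimplex //; apply/andP; split; nra.
move=> [t0]; rewrite on_edge transfer_vertex_hypersimplex // => tc01.
have w_edge : transfer w p q 0 = w by rewrite /transfer scale0r addr0.
have Pv_w : Pv F v w = 0 by rewrite -w_edge PvK ?mulr0 // lexx ler01.
by rewrite PvK // Pv_w; field.
Qed.

Let Pv_eq0_edge p q l : w ord0 p = 1 -> w ord0 q = 0 -> l != p -> l != q ->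
  v ord0 l = 1 - w ord0 l -> forall s, 0 <= s <= 1 -> Pv F v (transfer w p q s) = 0 * s.
Proof.
move=> wp wq lp lq vl s s01; rewrite mul0r.
apply: (Pv_eq0_coord F_strong (l := l)); rewrite ?(transfer_coord_out _ _ lp lq) //.
exact/transfer_vertex_hypersimplex.
Qed.

Lemma differentiable_factory_absurd : False.
Proof.
have dab : (fun T => dir_deriv (PvT F v T) w (edge_dir a b)) @ \oo --> 1 * c.
  apply: edge_dir_deriv_cvg => // s s01.
  by rewrite mul1r; exact: (Pv_transfer_edge F_strong Pw w01 wa wb s01).
have ba : b != a by rewrite eq_sym.
have daj := edge_dir_deriv_cvg wa wj (Pv_eq0_edge wa wj ba bj v_coord_b).
have dib := edge_dir_deriv_cvg wi wb (Pv_eq0_edge wi wb ai ab v_coord_a).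
have aj : a != j := neq_of_coord_one_zero wa wj.
have dij := edge_dir_deriv_cvg wi wj (Pv_eq0_edge wi wj ai aj v_coord_a).
have edge_dir_square : edge_dir a b = edge_dir a j + edge_dir i b - edge_dir i j.
  by apply/rowP => l; rewrite !mxE eqxx /=; ring.
have dir_deriv_square T : dir_deriv (PvT F v T) w (edge_dir a b) =
    dir_deriv (PvT F v T) w (edge_dir a j) + dir_deriv (PvT F v T) w (edge_dir i b)
    - dir_deriv (PvT F v T) w (edge_dir i j).
  have dPvT := differentiable_PvT F v T w.
  by rewrite edge_dir_square !(dir_derivE _ dPvT) raddfB raddfD.
have dab' : (fun T => dir_deriv (PvT F v T) w (edge_dir a b)) @ \oo -->
             0 * c + 0 * c - 0 * c.
  by rewrite (funext dir_deriv_square); exact: cvgB (cvgD daj dib) dij.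
have : 1 * c = 0 * c + 0 * c - 0 * c by exact: cvg_unique dab dab'.
by rewrite !mul0r mul1r addr0 subr0; apply/eqP; rewrite gt_eqF.
Qed.

End NoDifferentiableFactory.

Theorem lemma7p7 (R : realType) (n k : nat) :
  (1 < k)%N -> (k < n - 1)%N ->
  ~ (exists F : factory R n,
       strong_factory (@hypersimplex R n k) F /\
       differentiable_factory (@hypersimplex R n k) F).
Proof.
move=> k_gt1 k_lt [F [F_strong F_diff]].
have Sk_lt_n : (k.+1 < n)%N by move: k_lt; rewrite ltn_subRL add1n.
have k_lt_n : (k < n)%N := ltnW Sk_lt_n.
have one_lt_n : (1 < n)%N := ltn_trans k_gt1 k_lt_n.
pose w : 'rV[R]_n := \row_(l < n) ((l < k)%N)%:R.
have w_coord l : w ord0 l = ((l < k)%N)%:R by rewrite mxE.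
apply: (@differentiable_factory_absurd R n k F F_strong F_diff w (Ordinal (ltnW one_lt_n))
          (Ordinal one_lt_n) (Ordinal k_lt_n) (Ordinal Sk_lt_n)).
- exact: hypersimplex_first_k (ltnW k_lt_n).
- by move=> l; rewrite w_coord; case: (_ < _)%N; [right | left].
- by rewrite w_coord /= (ltnW k_gt1).
- by rewrite w_coord /= k_gt1.
- by rewrite w_coord /= ltnn.
- by rewrite w_coord /= ltnNge leqnSn.
- by [].
- by rewrite -val_eqE /= ltn_eqF.
Qed.
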